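(* Assume $\mathcal G$ is connected and all agents are MEICMP. Fix a leading node $i_0\in\mathbb V$ and replace $\Sigma_{i_0}$ by the augmented system $\Sigma'_{i_0}$: $\dot x_{i_0}=f_{i_0}(x_{i_0},u_{i_0}+\mathrm z,\mathrm w_{i_0})$, $y_{i_0}=h_{i_0}(x_{i_0},u_{i_0}+\mathrm z,\mathrm w_{i_0})$ with a constant $\mathrm z\in\mathbb R^d$, all other agents being unchanged. Let $\mathrm y\in(\mathbb R^d)^{|\mathbb V|}$ be such that $k_i^{-1}(\mathrm y_i)\ne\emptyset$ for every $i\in\mathbb V$. Then there exists $\mathrm z\in\mathbb R^d$ such that $\mathrm y$ is forcible as a steady state for the augmented network, i.e. there exist output-strictly MEICMP controllers $\{\Pi_e\}_{e\in\mathbb E}$ such that the closed loop (with $\Sigma'_{i_0}$ in place of $\Sigma_{i_0}$) has a steady state with output $\mathrm y$.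
   Context: Graph and network: $\mathcal G=(\mathbb V,\mathbb E)$ finite graph with arbitrarily oriented edges, incidence matrix $E$ ($E_{ik}=-1$, $E_{jk}=1$ for edge $k=(i,j)$, other entries of column $k$ zero), $d\ge1$, $\mathcal E=E\otimes I_d$. Agents $\Sigma_i$: $\dot x_i=f_i(x_i,u_i,\mathrm w_i)$, $y_i=h_i(x_i,u_i,\mathrm w_i)$, $u_i,y_i\in\mathbb R^d$, $\mathrm w_i$ fixed constants; controllers $\Pi_e$: $\dot\eta_e=\phi_e(\eta_e,\zeta_e)$, $\mu_e=\psi_e(\eta_e,\zeta_e)$; closed loop: $\zeta=\mathcal E^Ty$, $u=-\mathcal E\mu$. Steady-state relation of (unaugmented) agent $i$: $k_i=\{(\mathrm u_i,\mathrm y_i):\exists\mathrm x_i,\ f_i(\mathrm x_i,\mathrm u_i,\mathrm w_i)=0,\ \mathrm y_i=h_i(\mathrm x_i,\mathrm u_i,\mathrm w_i)\}$, $k_i^{-1}(\mathrm y_i)=\{\mathrm u_i:(\mathrm u_i,\mathrm y_i)\in k_i\}$. A 4-tuple of constants $(\mathrm u,\mathrm y,\zeta,\mu)$ is a steady state of a closed loop if there are constant agent and controller states making every state derivative zero, producing outputs $\mathrm y_i$ from inputs $\mathrm u_i$ and $\mu_e$ from $\zeta_e$, with $\zeta=\mathcal E^T\mathrm y$, $\mathrm u=-\mathcal E\mu$. A relation $R\subseteq\mathbb R^d\times\mathbb R^d$ is cyclically monotone (CM) if $\sum_{i=1}^N y_i^T(u_i-u_{i-1})\ge0$ for all $N\ge1$,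 $(u_1,y_1),\dots,(u_N,y_N)\in R$, $u_0=u_N$; maximal CM if not strictly contained in a larger CM relation. A system with input $u$, output $y$, state $x$ is (output-strictly) passive w.r.t. a steady-state pair $(\mathrm u,\mathrm y)$ if there is a storage $S(x)\ge0$ and $\rho\ge0$ ($\rho>0$ for output-strict) with $S(x(t_1))-S(x(t_0))\le\int_{t_0}^{t_1}[-\rho\|y-\mathrm y\|^2+(y-\mathrm y)^T(u-\mathrm u)]dt$ along trajectories. A system is (output-strictly) MEICMP if it is (output-strictly) passive w.r.t. every steady-state pair and its steady-state relation is maximal CM. *)

From Stdlib Require Import Reals.
From mathcomp Require Import ssreflect ssrbool ssrfun eqtype ssrnat seq choice fintype bigop fingraph.

Set Implicit Arguments.
Unset Strict Implicit.
Unset Printing Implicit Defensive.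

Local Open Scope R_scope.

Definition vec (d : nat) := 'I_d -> R.

Definition vadd d (u v : vec d) : vec d := fun k => u k + v k.
Definition vsub d (u v : vec d) : vec d := fun k => u k - v k.
Definition dot d (u v : vec d) : R := \big[Rplus/R0]_(k < d) (u k * v k).
Definition sqnorm d (u : vec d) : R := dot u u.

(** A (time-invariant, finite-dimensional) input/output system with
    input in R^m, output in R^p and state in R^(sdim):
      xdot = sf x u,   y = sh x u.
    (Constant exogenous parameters such as w_i are absorbed into sf, sh.) *)
Record system (m p : nat) := System {
  sdim : nat;
  sf : vec sdim -> vec m -> vec sdim;
  sh : vec sdim -> vec m -> vec p
}.
Arguments sdim {m p} s.
Arguments sf {m p} s _ _.
Arguments sh {m p} s _ _.
Arguments System {m p} sdim sf sh.

Definition ss_rel m p (S : system m p) (u : vec m) (y : vec p) : Prop :=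
  exists x : vec (sdim S), (forall k, sf S x u k = 0) /\ (forall k, y k = sh S x u k).

Definition is_traj m p (S : system m p) (u : R -> vec m) (x : R -> vec (sdim S)) : Prop :=
  forall t (k : 'I_(sdim S)),
    derivable_pt_lim (fun s => x s k) t (sf S (x t) (u t) k).
Arguments is_traj {m p} S u x.

Definition dissipative_with m (S : system m m) (rho : R) (ub yb : vec m)
    (St : vec (sdim S) -> R) : Prop :=
  forall (u : R -> vec m) (x : R -> vec (sdim S)), is_traj S u x ->
  forall t0 t1, t0 <= t1 ->
  forall pr : Riemann_integrable
      (fun t => - rho * sqnorm (vsub (sh S (x t) (u t)) yb)
                + dot (vsub (sh S (x t) (u t)) yb) (vsub (u t) ub)) t0 t1,
    St (x t1) - St (x t0) <= RiemannInt pr.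
Arguments dissipative_with {m} S rho ub yb St.

Definition passive_wrt m (S : system m m) (ub yb : vec m) : Prop :=
  exists (St : vec (sdim S) -> R) (rho : R),
    (forall x, 0 <= St x) /\ 0 <= rho /\ dissipative_with S rho ub yb St.

Definition os_passive_wrt m (S : system m m) (ub yb : vec m) : Prop :=
  exists (St : vec (sdim S) -> R) (rho : R),
    (forall x, 0 <= St x) /\ 0 < rho /\ dissipative_with S rho ub yb St.

(** Predecessor index in a cycle of length N: i-1, and 0 |-> N-1
    (this is u_0 = u_N after shifting indices 1..N to 0..N-1). *)
Definition cprev (N i : nat) : nat := match i with 0 => N.-1 | S j => j end.

Definition cyc_monotone d (Rel : vec d -> vec d -> Prop) : Prop :=
  forall (N : nat) (us ys : nat -> vec d), (0 < N)%N ->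
    (forall i, (i < N)%N -> Rel (us i) (ys i)) ->
    0 <= \big[Rplus/R0]_(i < N) dot (ys i) (vsub (us i) (us (cprev N i))).

Definition max_cyc_monotone d (Rel : vec d -> vec d -> Prop) : Prop :=
  cyc_monotone Rel /\
  forall Rel' : vec d -> vec d -> Prop, cyc_monotone Rel' ->
    (forall u y, Rel u y -> Rel' u y) -> (forall u y, Rel' u y -> Rel u y).

Definition MEICMP d (S : system d d) : Prop :=
  (forall u y, ss_rel S u y -> passive_wrt S u y) /\ max_cyc_monotone (ss_rel S).

Definition OS_MEICMP d (S : system d d) : Prop :=
  (forall u y, ss_rel S u y -> os_passive_wrt S u y) /\ max_cyc_monotone (ss_rel S).

Definition incidence n m (src dst : 'I_m -> 'I_n) (v : 'I_n) (e : 'I_m) : R :=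
  (if v == dst e then 1 else 0) - (if v == src e then 1 else 0).

Definition undirected_adj n m (src dst : 'I_m -> 'I_n) : rel 'I_n :=
  fun a b => [exists e, ((src e == a) && (dst e == b)) || ((src e == b) && (dst e == a))].

Definition graph_connected n m (src dst : 'I_m -> 'I_n) : Prop :=
  forall a b : 'I_n, connect (undirected_adj src dst) a b.

Definition augment d (S : system d d) (z : vec d) : system d d :=
  @System d d (sdim S) (fun x u => sf S x (vadd u z)) (fun x u => sh S x (vadd u z)).

(** Closed-loop steady state (u, y, zeta, mu) of agents Sig and controllers Pi:
    zeta = (E (x) I_d)^T y,  u = -(E (x) I_d) mu. *)
Definition closed_loop_ss d n m (src dst : 'I_m -> 'I_n)
    (Sig : 'I_n -> system d d) (Pi : 'I_m -> system d d)
    (u y : 'I_n -> vec d) (zeta mu : 'I_m -> vec d) : Prop :=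
  (exists (xs : forall i, vec (sdim (Sig i))) (etas : forall e, vec (sdim (Pi e))),
     (forall i k, sf (Sig i) (xs i) (u i) k = 0) /\
     (forall i k, y i k = sh (Sig i) (xs i) (u i) k) /\
     (forall e k, sf (Pi e) (etas e) (zeta e) k = 0) /\
     (forall e k, mu e k = sh (Pi e) (etas e) (zeta e) k)) /\
  (forall e k, zeta e k = \big[Rplus/R0]_(v < n) (incidence src dst v e * y v k)) /\
  (forall i k, u i k = - \big[Rplus/R0]_(e < m) (incidence src dst i e * mu e k)).

(* At a steady state the agent inputs u = -(E (x) I_d) mu are balanced: they sum
   to zero over the vertices. On a connected graph balance is also sufficient,
   since e_a w - e_b w is the divergence of the flow w carried along a path from a
   to b. So pick any u_i in k_i^-1(y_i); the offset z = sum_i u_i at the leading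
   node balances the inputs, and constant controllers with outputs mu_e realise
   them. A constant controller is output-strictly MEICMP: its steady-state
   relation R^d x {mu_e} is the subdifferential of the linear map zeta |-> mu_e.zeta,
   and its output never leaves the steady state. *)

From HB Require Import structures.
From Stdlib Require Import Reals Lra IndefiniteDescription FunctionalExtensionality.
From mathcomp Require Import ssreflect ssrbool ssrfun eqtype ssrnat seq choice fintype bigop fingraph.

Set Implicit Arguments.
Unset Strict Implicit.
Unset Printing Implicit Defensive.

Local Open Scope R_scope.

Lemma Rplus_associative : associative Rplus. Proof. by move=> *; ring. Qed.
HB.instance Definition _ :=
  Monoid.isComLaw.Build R R0 Rplus Rplus_associative Rplus_comm Rplus_0_l.

Section RealSums.

Variable I : finType.

Lemma sumR_opp (F : I -> R) :
  (- \big[Rplus/R0]_(i : I) F i) = \big[Rplus/R0]_(i : I) (- F i).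
Proof. by apply: (big_endo (fun x => - x)) => [x y|]; ring. Qed.

Lemma sumR_mull c (F : I -> R) :
  c * \big[Rplus/R0]_(i : I) F i = \big[Rplus/R0]_(i : I) (c * F i).
Proof. by apply: (big_endo (fun x => c * x)) => [x y|]; ring. Qed.

Lemma sumR_delta (j : I) (F : I -> R) :
  \big[Rplus/R0]_(i : I) (if i == j then F i else 0) = F j.
Proof. by rewrite (bigD1 j) //= eqxx big1 ?Rplus_0_r // => i /negbTE ->. Qed.

Lemma sumR_ge_term (F : I -> R) (j : I) :
  (forall i, 0 <= F i) -> F j <= \big[Rplus/R0]_(i : I) F i.
Proof.
move=> F_ge0; rewrite (bigD1 j) //=.
suff : 0 <= \big[Rplus/R0]_(i | i != j) F i by lra.
by apply: (big_ind (fun x => 0 <= x)) => //; [lra | move=> *; lra].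
Qed.

End RealSums.

Lemma sumR_cprev (N : nat) (F : nat -> R) : (0 < N)%N ->
  \big[Rplus/R0]_(i < N) F (cprev N i) = \big[Rplus/R0]_(i < N) F i.
Proof.
case: N => // N _.
by rewrite big_ord_recl big_ord_recr; exact: Rplus_comm.
Qed.

Section Vectors.

Variable d : nat.
Implicit Types u v : vec d.

Lemma dot0l u v : (forall k, u k = 0) -> dot u v = 0.
Proof. by move=> u0; rewrite /dot big1 // => k _; rewrite u0; ring. Qed.

Lemma dot_vsub_swap u1 u2 y1 y2 :
  dot y1 (vsub u1 u2) + dot y2 (vsub u2 u1) = dot (vsub y1 y2) (vsub u1 u2).
Proof. by rewrite /dot -big_split; apply: eq_bigr => k _; rewrite /vsub /=; ring. Qed.

Lemma sqnorm_le0 v : sqnorm v <= 0 -> forall k, v k = 0.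
Proof.
move=> v_le0 k; apply: Rsqr_0_uniq; apply: Rle_antisym; last exact: Rle_0_sqr.
apply: Rle_trans v_le0.
exact: (sumR_ge_term (F := fun j => v j * v j)) (fun j => Rle_0_sqr (v j)).
Qed.

Lemma cyc_monotone_monotone (Rel : vec d -> vec d -> Prop) u1 y1 u2 y2 :
  cyc_monotone Rel -> Rel u1 y1 -> Rel u2 y2 ->
  0 <= dot (vsub y1 y2) (vsub u1 u2).
Proof.
move=> cm r1 r2.
pose us i := if i == 0%N then u1 else u2.
pose ys i := if i == 0%N then y1 else y2.
have := cm 2%N us ys isT.
rewrite !big_ord_recl big_ord0 /= Rplus_0_r dot_vsub_swap.
by apply=> -[|[|i]].
Qed.

End Vectors.

Section Divergence.

Variables (n m : nat) (src dst : 'I_m -> 'I_n).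
Local Notation adj := (undirected_adj src dst).

Definition divergence d (mu : 'I_m -> vec d) : 'I_n -> vec d :=
  fun i k => - \big[Rplus/R0]_(e < m) (incidence src dst i e * mu e k).

Lemma divergence_add d (mu1 mu2 : 'I_m -> vec d) i k :
  divergence (fun e k => mu1 e k + mu2 e k) i k =
  divergence mu1 i k + divergence mu2 i k.
Proof.
rewrite /divergence -Ropp_plus_distr -big_split /=.
by congr (- _); apply: eq_bigr => e _; ring.
Qed.

Lemma divergence_sum d (J : finType) (mu : J -> 'I_m -> vec d) i k :
  divergence (fun e k => \big[Rplus/R0]_(j : J) mu j e k) i k =
  \big[Rplus/R0]_(j : J) divergence (mu j) i k.
Proof.
rewrite /divergence -sumR_opp; congr (- _).
by rewrite [RHS]exchange_big; apply: eq_bigr => e _; exact: sumR_mull.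
Qed.

Lemma edge_divergence d a c (w : vec d) : adj a c ->
  exists mu : 'I_m -> vec d, forall i k,
    divergence mu i k = (if i == a then w k else 0) - (if i == c then w k else 0).
Proof.
move=> /existsP[e edge_e].
have [s inc_s] : exists s, forall i,
    - (incidence src dst i e * s) = (if i == a then 1 else 0) - (if i == c then 1 else 0).
  case/orP: edge_e => /andP[/eqP <- /eqP <-]; [exists 1 | exists (-1)];
    by move=> i; rewrite /incidence; ring.
exists (fun e' k => if e' == e then s * w k else 0) => i k.
rewrite /divergence (bigD1 e) //= eqxx big1 => [|e' /negbTE ->]; last by ring.
have -> : - (incidence src dst i e * (s * w k) + 0) = - (incidence src dst i e * s) * w k
  by ring.
by rewrite inc_s; case: (i == a); case: (i == c); ring.
Qed.

Lemma path_divergence d a b (w : vec d) : connect adj a b ->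
  exists mu : 'I_m -> vec d, forall i k,
    divergence mu i k = (if i == a then w k else 0) - (if i == b then w k else 0).
Proof.
move/connectP=> [p]; elim: p a => [|c p IHp] a /= => [_ -> | /andP[adj_ac path_p] b_last].
  by exists (fun _ _ => 0) => i k; rewrite /divergence big1 => [|e _]; ring.
have [mu1 div_mu1] := edge_divergence w adj_ac.
have [mu2 div_mu2] := IHp c path_p b_last.
exists (fun e k => mu1 e k + mu2 e k) => i k.
by rewrite divergence_add div_mu1 div_mu2; ring.
Qed.

Lemma balanced_divergence d (r : 'I_n) (u : 'I_n -> vec d) :
  (forall v, connect adj v r) ->
  (forall k, \big[Rplus/R0]_(i < n) u i k = 0) ->
  exists mu : 'I_m -> vec d, forall i k, divergence mu i k = u i k.
Proof.
move=> reach_r u_balanced.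
have /functional_choice[mu div_mu] : forall v, exists mu : 'I_m -> vec d,
    forall i k, divergence mu i k = (if i == v then u v k else 0) - (if i == r then u v k else 0).
  by move=> v; apply: path_divergence (reach_r v).
exists (fun e k => \big[Rplus/R0]_(v < n) mu v e k) => i k.
rewrite divergence_sum; under eq_bigr do rewrite div_mu [i == _]eq_sym.
rewrite big_split /= -sumR_opp sumR_delta.
case: (i == r); first by rewrite u_balanced; ring.
by rewrite big1 //; ring.
Qed.

End Divergence.

Section ConstantSystem.

Variables (d : nat) (c : vec d).

Definition const_sys : system d d := System 0 (fun x _ => x) (fun _ _ => c).

Lemma ss_rel_const u y : ss_rel const_sys u y <-> forall k, y k = c k.
Proof.
split=> [[_ []] //|y_c].
by exists (fun _ => 0); split=> [[]|].
Qed.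

Lemma const_sys_os_passive u y : ss_rel const_sys u y -> os_passive_wrt const_sys u y.
Proof.
move=> /ss_rel_const y_c; exists (fun _ => 0), 1; split; [move=> _; lra | split; first lra].
move=> uu x _ t0 t1 t01 pr; rewrite Rminus_0_r.
have out_eq : forall k, vsub c y k = 0 by move=> k; rewrite /vsub y_c; ring.
rewrite (RiemannInt_P18 pr (RiemannInt_P14 t0 t1 0) t01) ?RiemannInt_P15; first lra.
by move=> t _; rewrite /fct_cte /sqnorm /= !dot0l //; lra.
Qed.

Lemma const_sys_cyc_monotone : cyc_monotone (ss_rel const_sys).
Proof.
move=> N us ys N_gt0 ss_ys.
have term_eq : forall i : 'I_N, dot (ys i) (vsub (us i) (us (cprev N i))) =
    dot c (us i) - dot c (us (cprev N i)).
  move=> i; rewrite /dot /Rminus sumR_opp -big_split /=.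
  by apply: eq_bigr => k _; rewrite (proj1 (ss_rel_const _ _) (ss_ys i (ltn_ord i))) /vsub; ring.
rewrite (eq_bigr _ (fun i _ => term_eq i)) /Rminus big_split /= -sumR_opp.
by rewrite (sumR_cprev (fun j => dot c (us j))) // Rplus_opp_r; right.
Qed.

Lemma const_sys_max_cyc_monotone : max_cyc_monotone (ss_rel const_sys).
Proof.
split=> [|Rel cm_Rel sub_Rel u y Rel_uy]; first exact: const_sys_cyc_monotone.
have Rel_shifted : Rel (vadd u (vsub y c)) c by apply/sub_Rel/ss_rel_const.
have := cyc_monotone_monotone cm_Rel Rel_uy Rel_shifted.
have -> : dot (vsub y c) (vsub u (vadd u (vsub y c))) = - sqnorm (vsub y c).
  rewrite /sqnorm /dot sumR_opp; apply: eq_bigr => k _.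
  by rewrite /vsub /vadd; ring.
move=> sq_le0; have /sqnorm_le0 yc0 : sqnorm (vsub y c) <= 0 by lra.
by apply/ss_rel_const => k; have := yc0 k; rewrite /vsub; lra.
Qed.

Lemma const_sys_OS_MEICMP : OS_MEICMP const_sys.
Proof.
split; [exact: const_sys_os_passive | exact: const_sys_max_cyc_monotone].
Qed.

End ConstantSystem.

Lemma closed_loop_ss_of_ss_rel d n m (src dst : 'I_m -> 'I_n)
    (Sig : 'I_n -> system d d) (Pi : 'I_m -> system d d)
    (u y : 'I_n -> vec d) (zeta mu : 'I_m -> vec d) :
  (forall i, ss_rel (Sig i) (u i) (y i)) ->
  (forall e, ss_rel (Pi e) (zeta e) (mu e)) ->
  (forall e k, zeta e k = \big[Rplus/R0]_(v < n) (incidence src dst v e * y v k)) ->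
  (forall i k, u i k = divergence src dst mu i k) ->
  closed_loop_ss src dst Sig Pi u y zeta mu.
Proof.
move=> ss_agents ss_ctrls zeta_def u_def; split=> //.
exists (fun i => sval (constructive_indefinite_description _ (ss_agents i))).
exists (fun e => sval (constructive_indefinite_description _ (ss_ctrls e))).
by split; [|split; [|split]] => ? ?; case: constructive_indefinite_description => ? [].
Qed.

Theorem mainTheorem10 (d n m : nat) (src dst : 'I_m -> 'I_n)
  (Sig : 'I_n -> system d d) (i0 : 'I_n) (y : 'I_n -> vec d) :
  (0 < d)%N ->
  (forall e, src e != dst e) ->
  graph_connected src dst ->
  (forall i, MEICMP (Sig i)) ->
  (forall i, exists ui : vec d, ss_rel (Sig i) ui (y i)) ->
  exists z : vec d,
    exists Pi : 'I_m -> system d d,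
      (forall e, OS_MEICMP (Pi e)) /\
      exists (u : 'I_n -> vec d) (zeta mu : 'I_m -> vec d),
        closed_loop_ss src dst
          (fun i => if i == i0 then augment (Sig i) z else Sig i) Pi u y zeta mu.
Proof.
move=> _ _ connected _ /functional_choice[ui ss_ui].
pose z k := \big[Rplus/R0]_(v < n) ui v k.
pose u i k := ui i k - (if i == i0 then z k else 0).
have u_balanced : forall k, \big[Rplus/R0]_(i < n) u i k = 0.
  move=> k; rewrite /u /Rminus big_split /= -sumR_opp.
  by rewrite (sumR_delta i0 (fun _ => z k)) Rplus_opp_r.
have [mu div_mu] := balanced_divergence (fun v => connected v i0) u_balanced.
exists z, (fun e => const_sys (mu e)); split=> [e|]; first exact: const_sys_OS_MEICMP.
exists u, (fun e k => \big[Rplus/R0]_(v < n) (incidence src dst v e * y v k)), mu.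
apply: closed_loop_ss_of_ss_rel => // [i | e]; last exact/ss_rel_const.
case: (boolP (i == i0)) => i_i0; last first.
  by have -> : u i = ui i by apply: functional_extensionality => k; rewrite /u (negbTE i_i0); ring.
have u_shift : vadd (u i) z = ui i.
  by apply: functional_extensionality => k; rewrite /vadd /u i_i0; ring.
by move: (ss_ui i); rewrite -u_shift.
Qed.
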